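(* Let $a,b$ be positive integers with $a\le b$, and suppose that every nonnegative integer $n$ can be written as $ax^2+by^2+(z^2+zw+w^2)$ with $x,y,z,w\in\mathbb{Z}$. Then $a\in\{1,2\}$. *)

From Stdlib Require Import ZArith.
Open Scope Z_scope.

Definition represents (a b n : Z) : Prop :=
  exists x y z w : Z, n = a * x ^ 2 + b * y ^ 2 + (z ^ 2 + z * w + w ^ 2).

(* The form z^2 + zw + w^2 never takes the value 2.  If a >= 3 then also b >= 3, so in a
   representation of 2 the terms a x^2 and b y^2 must vanish, leaving 2 = z^2 + zw + w^2. *)
From Stdlib Require Import ZArith Lia.
Open Scope Z_scope.

Lemma eisenstein_form_nonneg (z w : Z) : 0 <= z ^ 2 + z * w + w ^ 2.
Proof. nia. Qed.

Lemma eisenstein_form_ne2 (z w : Z) : z ^ 2 + z * w + w ^ 2 <> 2.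
Proof.
  intro H.
  (* 4(z^2 + zw + w^2) = (2z + w)^2 + 3w^2 bounds both variables. *)
  assert (Hw : w = -1 \/ w = 0 \/ w = 1) by nia.
  assert (Hz : z = -2 \/ z = -1 \/ z = 0 \/ z = 1 \/ z = 2) by nia.
  destruct Hw as [Hw|[Hw|Hw]]; destruct Hz as [Hz|[Hz|[Hz|[Hz|Hz]]]];
    subst; lia.
Qed.

Lemma scaled_square_eq0 (c x n : Z) :
  n < c -> 0 <= c * x ^ 2 <= n -> x = 0.
Proof.
  intros Hnc Hb.
  destruct (Z.eq_dec x 0) as [|Hx]; [assumption|].
  assert (1 <= x ^ 2) by nia.
  nia.
Qed.

Lemma represents2_coeff_le2 (a b : Z) :
  0 < a -> a <= b -> represents a b 2 -> a <= 2.
Proof.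
  intros ha hab [x [y [z [w E]]]].
  destruct (Z_le_gt_dec a 2) as [|Ha3]; [assumption|exfalso].
  pose proof (eisenstein_form_nonneg z w).
  assert (0 <= x ^ 2) by nia.
  assert (0 <= y ^ 2) by nia.
  assert (x = 0) by (apply (scaled_square_eq0 a x 2); nia).
  assert (y = 0) by (apply (scaled_square_eq0 b y 2); nia).
  subst x y.
  apply (eisenstein_form_ne2 z w); lia.
Qed.

Theorem lemma3p1 (a b : Z) (ha : 0 < a) (hb : 0 < b) (hab : a <= b)
  (huniv : forall n : Z, 0 <= n -> represents a b n) :
  a = 1 \/ a = 2.
Proof.
  pose proof (represents2_coeff_le2 a b ha hab (huniv 2 ltac:(lia))).
  lia.
Qed.
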